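(* Assume that a Luzin set exists. Then there exists a set $A\subseteq\mathbb{R}^2$ such that for every straight line $l\subseteq\mathbb{R}^2$, the set $A\cap l$ is a strong Luzin set in $l$, i.e. for an isometry $T:\mathbb{R}\to l$ onto $l$, the set $T^{-1}(A\cap l)$ is a strong Luzin subset of $\mathbb{R}$.
   Context: A Luzin set is a set $L\subseteq\mathbb{R}$ with $|L|=\mathfrak{c}$ such that $L\cap M$ is countable for every meager $M\subseteq\mathbb{R}$; it is a strong Luzin set if moreover $L\cap B$ is uncountable for every non-meager Borel set $B\subseteq\mathbb{R}$. *)

From Stdlib Require Import Reals Rtopology.
Open Scope R_scope.

Definition countable (S : R -> Prop) : Prop :=
  exists g : nat -> R, forall x, S x -> exists n, g n = x.

Definition card_continuum (L : R -> Prop) : Prop :=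
  exists f : R -> R,
    (forall x y, f x = f y -> x = y) /\
    (forall x, L (f x)) /\ (forall y, L y -> exists x, f x = y).

Definition nowhere_dense (N : R -> Prop) : Prop :=
  forall x, ~ interior (adherence N) x.

Definition meager (M : R -> Prop) : Prop :=
  exists Nn : nat -> (R -> Prop),
    (forall n, nowhere_dense (Nn n)) /\
    (forall x, M x -> exists n, Nn n x).

Inductive borel : (R -> Prop) -> Prop :=
  | borel_open : forall U, open_set U -> borel U
  | borel_compl : forall B, borel B -> borel (fun x => ~ B x)
  | borel_cunion : forall Bn : nat -> (R -> Prop),
      (forall n, borel (Bn n)) -> borel (fun x => exists n, Bn n x)
  | borel_ext : forall B C, borel B -> (forall x, B x <-> C x) -> borel C.

Definition luzin (L : R -> Prop) : Prop :=
  card_continuum L /\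
  forall M, meager M -> countable (fun x => L x /\ M x).

Definition strong_luzin (L : R -> Prop) : Prop :=
  luzin L /\
  forall B, borel B -> ~ meager B -> ~ countable (fun x => L x /\ B x).

Definition dist2 (p q : R * R) : R :=
  sqrt ((fst p - fst q) ^ 2 + (snd p - snd q) ^ 2).

(* Isometric embeddings R -> R^2; their images are exactly the straight lines,
   and every isometry of R onto a line is of this kind. *)
Definition isometry_R_R2 (T : R -> R * R) : Prop :=
  forall s t, dist2 (T s) (T t) = Rabs (s - t).

(* From a Luzin set build [S ⊆ R], a countable union of shrunken rational
   translates of it, that meets every meager set in a countable set but every
   interval in an uncountable one, and put [A = {(x, y) | x + y^3 ∈ S}].  Along
   a line [t ↦ (p1 + u1 t, p2 + u2 t)], membership in [A] reads [g t ∈ S] for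
   [g t = p1 + u1 t + (p2 + u2 t)^3], a continuous surjection that is strictly
   monotone near every point outside the (at most two) zeros of [g'].  On such
   monotone pieces [g] maps meager sets to meager sets and intervals onto
   intervals, so [S ∘ g] inherits both Luzin properties from [S]; for a
   non-meager Borel set one uses that it is co-meager in some interval. *)
From Stdlib Require Import Reals Lra Lia Classical ClassicalEpsilon
  IndefiniteDescription FunctionalExtensionality Cantor.
Open Scope R_scope.

Lemma countable_subset (A B : R -> Prop) :
  countable B -> (forall x, A x -> B x) -> countable A.
Proof. intros [g Hg] AB. exists g. intros x Ax. exact (Hg x (AB x Ax)). Qed.

Lemma countable_empty : countable (fun _ => False).
Proof. exists (fun _ => 0). intros x []. Qed.

Lemma countable_bigunion (F : nat -> R -> Prop) :
  (forall n, countable (F n)) -> countable (fun x => exists n, F n x).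
Proof.
  intros HF. apply functional_choice in HF as [g Hg].
  exists (fun k => g (fst (of_nat k)) (snd (of_nat k))).
  intros x [n Fx]. destruct (Hg n x Fx) as [m <-].
  exists (to_nat (n, m)). now rewrite cancel_of_to.
Qed.

Lemma countable_union (A B : R -> Prop) :
  countable A -> countable B -> countable (fun x => A x \/ B x).
Proof.
  intros HA HB.
  apply countable_subset with (fun x => exists n : nat, (if Nat.eqb n 0 then A else B) x).
  - apply countable_bigunion. intros [|n]; assumption.
  - intros x [Ax|Bx]; [exists 0%nat | exists 1%nat]; assumption.
Qed.

Lemma countable_image (A : R -> Prop) (f : R -> R) :
  countable A -> countable (fun y => exists x, A x /\ f x = y).
Proof.
  intros [g Hg]. exists (fun n => f (g n)). intros y [x [Ax <-]].
  destruct (Hg x Ax) as [n <-]. now exists n.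
Qed.

Lemma countable_of_injective_image (A : R -> Prop) (f : R -> R) :
  (forall x y, A x -> A y -> f x = f y -> x = y) ->
  countable (fun y => exists x, A x /\ f x = y) -> countable A.
Proof.
  intros Hinj [g Hg].
  exists (fun n => epsilon (inhabits 0) (fun x => A x /\ f x = g n)).
  intros x Ax. destruct (Hg (f x) (ex_intro _ x (conj Ax eq_refl))) as [n Hn].
  exists n. destruct (epsilon_spec (inhabits 0) (fun x => A x /\ f x = g n)
    (ex_intro _ x (conj Ax (eq_sym Hn)))) as [Aback Hback].
  apply Hinj; [exact Aback | exact Ax | congruence].
Qed.

Lemma exists_outside_countable (A E : R -> Prop) :
  ~ countable A -> countable E -> exists x, A x /\ ~ E x.
Proof.
  intros HA HE. apply NNPP. intros Hno. apply HA.
  apply countable_subset with E; [exact HE |].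
  intros x Ax. apply NNPP. intros nEx. apply Hno. now exists x.
Qed.

(* Cantor's nested-interval argument: at each step keep a third of the
   current interval that avoids [h n]. *)
Section NestedIntervals.
Variables (a b : R) (h : nat -> R).
Hypothesis Hab : a < b.

Definition avoid_step (k : nat) (p : R * R) : R * R :=
  let (c, d) := p in
  if Rle_dec (h k) ((c + d) / 2) then ((c + 2 * d) / 3, d) else (c, (2 * c + d) / 3).

Fixpoint avoid_interval (n : nat) : R * R :=
  match n with O => (a, b) | S k => avoid_step k (avoid_interval k) end.

Lemma avoid_interval_step n :
  fst (avoid_interval n) < snd (avoid_interval n) ->
  fst (avoid_interval n) <= fst (avoid_interval (S n)) /\
  fst (avoid_interval (S n)) < snd (avoid_interval (S n)) /\
  snd (avoid_interval (S n)) <= snd (avoid_interval n) /\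
  (h n < fst (avoid_interval (S n)) \/ snd (avoid_interval (S n)) < h n).
Proof.
  simpl. destruct (avoid_interval n) as [c d]; simpl.
  destruct Rle_dec; simpl; lra.
Qed.

Lemma avoid_interval_lt n : fst (avoid_interval n) < snd (avoid_interval n).
Proof. induction n; [exact Hab | apply avoid_interval_step in IHn; lra]. Qed.

Lemma avoid_interval_nested n m : (n <= m)%nat ->
  fst (avoid_interval n) <= fst (avoid_interval m) /\
  snd (avoid_interval m) <= snd (avoid_interval n).
Proof.
  induction 1; [lra |].
  pose proof (avoid_interval_step m (avoid_interval_lt m)). lra.
Qed.

Lemma avoid_interval_left_below_right n m :
  fst (avoid_interval n) <= snd (avoid_interval m).
Proof.
  pose proof (avoid_interval_lt n). pose proof (avoid_interval_lt m).
  destruct (Nat.le_ge_cases n m) as [Hnm|Hnm];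
    pose proof (avoid_interval_nested _ _ Hnm); lra.
Qed.

Lemma exists_avoiding_sequence : exists x, a <= x <= b /\ forall n, h n <> x.
Proof.
  destruct (completeness (fun y => exists n, y = fst (avoid_interval n)))
    as [x [Hub Hlub]].
  - exists b. intros y [n ->]. exact (avoid_interval_left_below_right n 0).
  - exists a, 0%nat. reflexivity.
  - assert (Hbelow : forall n, x <= snd (avoid_interval n)).
    { intros n. apply Hlub. intros y [m ->]. apply avoid_interval_left_below_right. }
    exists x. split; [split |].
    + exact (Hub a (ex_intro _ 0%nat eq_refl)).
    + exact (Hbelow 0%nat).
    + intros n E.
      assert (fst (avoid_interval (S n)) <= x) by (apply Hub; eauto).
      pose proof (Hbelow (S n)).
      pose proof (avoid_interval_step n (avoid_interval_lt n)). lra.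
Qed.

End NestedIntervals.

Lemma interval_uncountable a b : a < b -> ~ countable (fun x => a < x < b).
Proof.
  intros Hab [h Hh].
  destruct (exists_avoiding_sequence ((2 * a + b) / 3) ((a + 2 * b) / 3) h)
    as [x [Hx Hnot]]; [lra |].
  destruct (Hh x) as [n Hn]; [lra |]. exact (Hnot n Hn).
Qed.

Lemma open_set_balls (U : R -> Prop) :
  open_set U <-> forall x, U x -> exists d, 0 < d /\ forall y, Rabs (y - x) < d -> U y.
Proof.
  split.
  - intros HU x Ux. destruct (HU x Ux) as [d Hd].
    exists d. split; [apply cond_pos | intros y Hy; exact (Hd y Hy)].
  - intros HU x Ux. destruct (HU x Ux) as [d [Hd Hball]].
    exists (mkposreal d Hd). intros y Hy. exact (Hball y Hy).
Qed.

Lemma continuity_ball (g : R -> R) t eps : continuity g -> 0 < eps ->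
  exists d, 0 < d /\ forall s, Rabs (s - t) < d -> Rabs (g s - g t) < eps.
Proof.
  intros Hg Heps. destruct (Hg t eps Heps) as [d [Hd Hclose]].
  exists d. split; [exact Hd |]. intros s Hs.
  destruct (Req_dec s t) as [->|Hst].
  - now rewrite Rminus_diag, Rabs_R0.
  - apply (Hclose s). split; [split; [exact I | auto] | exact Hs].
Qed.

Definition interval_nowhere_dense (N : R -> Prop) : Prop :=
  forall a b, a < b -> exists c d, a <= c /\ c < d /\ d <= b /\
    forall x, c < x < d -> ~ N x.

Lemma nowhere_denseP (N : R -> Prop) :
  nowhere_dense N <-> interval_nowhere_dense N.
Proof.
  split.
  - intros HN a b Hab. apply NNPP. intros Hno.
    apply (HN ((a + b) / 2)). exists (mkposreal ((b - a) / 2) ltac:(lra)).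
    intros y Hy. unfold disc in Hy. simpl in Hy. apply Rabs_def2 in Hy.
    intros V [e He]. apply NNPP. intros Hdisj. pose proof (cond_pos e).
    apply Hno. exists (Rmax a (y - e)), (Rmin b (y + e)).
    pose proof (Rmax_l a (y - e)). pose proof (Rmax_r a (y - e)).
    pose proof (Rmin_l b (y + e)). pose proof (Rmin_r b (y + e)).
    split; [lra | split; [apply Rmax_lub_lt; apply Rmin_glb_lt; lra | split; [lra |]]].
    intros x Hx Nx. apply Hdisj. exists x. split; [| exact Nx].
    apply He. unfold disc. apply Rabs_def1; lra.
  - intros HN x [d Hd]. pose proof (cond_pos d).
    destruct (HN (x - d) (x + d)) as [c [c' [H1 [H2 [H3 Hfree]]]]]; [lra |].
    assert (Hmid : adherence N ((c + c') / 2)).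
    { apply Hd. unfold disc. apply Rabs_def1; lra. }
    destruct (Hmid (disc ((c + c') / 2) (mkposreal ((c' - c) / 2) ltac:(lra))))
      as [z [Hz Nz]].
    { now exists (mkposreal ((c' - c) / 2) ltac:(lra)). }
    unfold disc in Hz. simpl in Hz. apply Rabs_def2 in Hz.
    apply (Hfree z); [lra | exact Nz].
Qed.

Lemma interval_nowhere_dense_opp N :
  interval_nowhere_dense N -> interval_nowhere_dense (fun x => N (- x)).
Proof.
  intros HN a b Hab. destruct (HN (- b) (- a)) as [c [d [H1 [H2 [H3 Hfree]]]]]; [lra |].
  exists (- d), (- c). repeat split; try lra. intros x Hx. apply Hfree. lra.
Qed.

Lemma interval_nowhere_dense_affine N c d : 0 < d ->
  interval_nowhere_dense N -> interval_nowhere_dense (fun x => N (c + d * x)).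
Proof.
  intros Hd HN a b Hab.
  destruct (HN (c + d * a) (c + d * b)) as [c1 [d1 [H1 [H2 [H3 Hfree]]]]]; [nra |].
  exists ((c1 - c) / d), ((d1 - c) / d).
  split; [| split; [| split]].
  - apply (Rmult_le_reg_l d); [lra |]. field_simplify; lra.
  - apply Rmult_lt_compat_r; [apply Rinv_0_lt_compat |]; lra.
  - apply (Rmult_le_reg_l d); [lra |]. field_simplify; lra.
  - intros x [Hx1 Hx2]. apply Hfree.
    apply (Rmult_lt_compat_l d) in Hx1; [| lra]. apply (Rmult_lt_compat_l d) in Hx2; [| lra].
    field_simplify in Hx1; [| lra]. field_simplify in Hx2; [| lra]. lra.
Qed.

Lemma meager_subset A B : meager B -> (forall x, A x -> B x) -> meager A.
Proof. intros [N [HN Hcov]] AB. exists N. split; [exact HN | auto]. Qed.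

Lemma meager_of_nowhere_dense N : nowhere_dense N -> meager N.
Proof. intros HN. exists (fun _ => N). split; [auto | intros x Nx; now exists 0%nat]. Qed.

Lemma meager_empty : meager (fun _ => False).
Proof.
  apply meager_of_nowhere_dense, nowhere_denseP.
  intros a b Hab. exists a, b. repeat split; lra || tauto.
Qed.

Lemma meager_bigunion (F : nat -> R -> Prop) :
  (forall n, meager (F n)) -> meager (fun x => exists n, F n x).
Proof.
  intros HF. apply functional_choice in HF as [N HN].
  exists (fun k => N (fst (of_nat k)) (snd (of_nat k))). split.
  - intros k. apply (proj1 (HN _)).
  - intros x [n Fx]. destruct (proj2 (HN n) x Fx) as [m Hm].
    exists (to_nat (n, m)). now rewrite cancel_of_to.
Qed.

Lemma meager_union A B : meager A -> meager B -> meager (fun x => A x \/ B x).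
Proof.
  intros HA HB.
  apply meager_subset with (fun x => exists n : nat, (if Nat.eqb n 0 then A else B) x).
  - apply meager_bigunion. intros [|n]; assumption.
  - intros x [Ax|Bx]; [exists 0%nat | exists 1%nat]; assumption.
Qed.

Lemma meager_affine M c d : 0 < d -> meager M -> meager (fun x => M (c + d * x)).
Proof.
  intros Hd [N [HN Hcov]]. exists (fun n x => N n (c + d * x)). split.
  - intros n. apply nowhere_denseP, interval_nowhere_dense_affine, nowhere_denseP; auto.
  - intros x Mx. exact (Hcov _ Mx).
Qed.

Definition baire_property (B : R -> Prop) : Prop :=
  exists U M, open_set U /\ meager M /\ forall x, ~ M x -> (B x <-> U x).

Definition exterior (U : R -> Prop) (x : R) : Prop :=
  exists d, 0 < d /\ forall y, Rabs (y - x) < d -> ~ U y.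

Lemma open_exterior U : open_set (exterior U).
Proof.
  apply open_set_balls. intros x [d [Hd Hout]]. exists (d / 2). split; [lra |].
  intros y Hy. exists (d / 2). split; [lra |]. intros z Hz. apply Hout.
  pose proof (Rabs_triang (z - y) (y - x)).
  replace (z - y + (y - x)) with (z - x) in * by ring. lra.
Qed.

Lemma frontier_nowhere_dense U :
  open_set U -> nowhere_dense (fun x => ~ U x /\ ~ exterior U x).
Proof.
  rewrite open_set_balls. intros HU. apply nowhere_denseP. intros a b Hab.
  destruct (classic (exists x, a < x < b /\ U x)) as [[x [Hx Ux]]|Hno].
  - destruct (HU x Ux) as [d [Hd Hball]].
    exists (Rmax a (x - d)), (Rmin b (x + d)).
    pose proof (Rmax_l a (x - d)). pose proof (Rmax_r a (x - d)).
    pose proof (Rmin_l b (x + d)). pose proof (Rmin_r b (x + d)).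
    split; [lra | split; [apply Rmax_lub_lt; apply Rmin_glb_lt; lra | split; [lra |]]].
    intros y Hy [nUy _]. apply nUy, Hball, Rabs_def1; lra.
  - exists a, b. repeat split; try lra. intros x Hx [_ Hext]. apply Hext.
    exists (Rmin (x - a) (b - x)). split; [apply Rmin_glb_lt; lra |].
    intros y Hy Uy. apply Hno. exists y. split; [| exact Uy].
    pose proof (Rmin_l (x - a) (b - x)). pose proof (Rmin_r (x - a) (b - x)).
    apply Rabs_def2 in Hy. lra.
Qed.

(* The complement of an open set [U] equals the open set [exterior U] up to
   the nowhere dense frontier of [U]. *)
Lemma baire_property_compl B : baire_property B -> baire_property (fun x => ~ B x).
Proof.
  intros [U [M [HU [HM HBU]]]].
  exists (exterior U), (fun x => M x \/ (~ U x /\ ~ exterior U x)).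
  split; [apply open_exterior | split].
  - apply meager_union; [exact HM |].
    apply meager_of_nowhere_dense, frontier_nowhere_dense, HU.
  - intros x Hx. specialize (HBU x (fun Mx => Hx (or_introl Mx))). split.
    + intros nBx. apply NNPP. intros Hext. apply Hx. right. tauto.
    + intros [d [Hd Hout]] Bx. apply (Hout x); [| tauto].
      now rewrite Rminus_diag, Rabs_R0.
Qed.

Lemma baire_property_bigunion (F : nat -> R -> Prop) :
  (forall n, baire_property (F n)) -> baire_property (fun x => exists n, F n x).
Proof.
  intros HF.
  assert (HF' : forall n, exists UM : (R -> Prop) * (R -> Prop),
    open_set (fst UM) /\ meager (snd UM) /\
    forall x, ~ snd UM x -> (F n x <-> fst UM x)).
  { intros n. destruct (HF n) as [U [M HUM]]. now exists (U, M). }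
  apply functional_choice in HF' as [UM HUM].
  exists (fun x => exists n, fst (UM n) x), (fun x => exists n, snd (UM n) x).
  split; [| split].
  - apply open_set_balls. intros x [n Hn].
    destruct (proj1 (open_set_balls _) (proj1 (HUM n)) x Hn) as [d [Hd Hball]].
    exists d. split; [exact Hd |]. intros y Hy. exists n. exact (Hball y Hy).
  - apply meager_bigunion. intros n. apply (HUM n).
  - intros x Hx. split; intros [n Hn]; exists n;
      apply (proj2 (proj2 (HUM n)) x); eauto.
Qed.

Lemma borel_baire_property B : borel B -> baire_property B.
Proof.
  induction 1 as [U HU | B _ IH | F _ IH | B C _ IH HBC].
  - exists U, (fun _ => False). repeat split; auto using meager_empty.
  - now apply baire_property_compl.
  - now apply baire_property_bigunion.
  - destruct IH as [U [M [HU [HM HBU]]]]. exists U, M.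
    split; [exact HU | split; [exact HM |]]. intros x nMx. rewrite <- HBC. exact (HBU x nMx).
Qed.

Lemma borel_nonmeager_interval B : borel B -> ~ meager B ->
  exists a b M, a < b /\ meager M /\ forall x, a < x < b -> ~ M x -> B x.
Proof.
  intros HB HnM. destruct (borel_baire_property B HB) as [U [M [HU [HM HBU]]]].
  destruct (classic (exists x, U x)) as [[x Ux]|Hempty].
  - destruct (proj1 (open_set_balls U) HU x Ux) as [d [Hd Hball]].
    exists (x - d), (x + d), M. split; [lra | split; [exact HM |]].
    intros y Hy nMy. apply (HBU y nMy), Hball, Rabs_def1; lra.
  - exfalso. apply HnM, meager_subset with M; [exact HM |].
    intros x Bx. apply NNPP. intros nMx. apply Hempty. exists x. now apply (HBU x nMx).
Qed.

(* Schroeder-Bernstein for [Sg ⊆ R]: shift by [i] exactly along the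
   [i]-orbits of the points outside [Sg]. *)
Lemma card_continuum_of_injection (Sg : R -> Prop) (i : R -> R) :
  (forall x y, i x = i y -> x = y) -> (forall x, Sg (i x)) -> card_continuum Sg.
Proof.
  intros Hinj HSg.
  set (D := fun x => exists n z, ~ Sg z /\ Nat.iter n i z = x).
  assert (HD : forall x, D x -> D (i x)).
  { intros x [n [z [Hz <-]]]. now exists (S n), z. }
  exists (fun x => if excluded_middle_informative (D x) then i x else x).
  split; [| split].
  - intros x y.
    destruct (excluded_middle_informative (D x)) as [Dx|nDx];
      destruct (excluded_middle_informative (D y)) as [Dy|nDy]; intros E.
    + auto.
    + subst y. now contradict nDy; apply HD.
    + subst x. now contradict nDx; apply HD.
    + exact E.
  - intros x. destruct (excluded_middle_informative (D x)) as [_|nDx]; [apply HSg |].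
    apply NNPP. intros nSx. apply nDx. now exists O, x.
  - intros y Sy. destruct (classic (D y)) as [[[|k] [z [Hz Hy]]]|nDy].
    + simpl in Hy. subst. contradiction.
    + exists (Nat.iter k i z).
      destruct (excluded_middle_informative (D (Nat.iter k i z))) as [_|nD]; [exact Hy |].
      exfalso. apply nD. now exists k, z.
    + exists y. now destruct (excluded_middle_informative (D y)).
Qed.

Definition rat_seq (n : nat) : R :=
  let (p, m) := of_nat n in let (k1, k2) := of_nat p in (INR k1 - INR k2) / INR (S m).

Lemma IZR_INR_diff (k : Z) : IZR k = INR (Z.to_nat k) - INR (Z.to_nat (- k)).
Proof.
  destruct k as [|p|p]; simpl; rewrite ?INR_IZR_INZ, ?Znat.positive_nat_Z; [ring | ring |].
  rewrite <- Pos2Z.opp_pos, opp_IZR. ring.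
Qed.

Lemma rat_seq_dense a b : a < b -> exists n, a < rat_seq n < b.
Proof.
  intros Hab. destruct (archimed_cor1 (b - a)) as [N [HN HN0]]; [lra |].
  assert (HNpos : 0 < INR N) by (apply lt_0_INR; exact HN0).
  destruct (archimed (a * INR N)) as [Hup1 Hup2].
  set (k := up (a * INR N)) in *.
  exists (to_nat (to_nat (Z.to_nat k, Z.to_nat (- k)), Nat.pred N)).
  unfold rat_seq. rewrite !cancel_of_to, <- IZR_INR_diff, Nat.succ_pred_pos by exact HN0.
  assert (Hstep : 1 < (b - a) * INR N).
  { apply (Rmult_lt_compat_r (INR N)) in HN; [| exact HNpos].
    now rewrite Rinv_l in HN by lra. }
  split; apply (Rmult_lt_reg_r (INR N)); try exact HNpos;
    unfold Rdiv; rewrite Rmult_assoc, Rinv_l, Rmult_1_r by lra; lra.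
Qed.

Definition dense_luzin (S : R -> Prop) : Prop :=
  (exists phi : R -> R, (forall x y, phi x = phi y -> x = y) /\ forall x, S (phi x)) /\
  (forall M, meager M -> countable (fun x => S x /\ M x)) /\
  (forall a b, a < b -> ~ countable (fun x => S x /\ a < x < b)).

Lemma luzin_uncountable L : luzin L -> ~ countable L.
Proof.
  intros [[f [Hinj [HfL _]]] _] HL. apply (interval_uncountable 0 1); [lra |].
  apply (countable_of_injective_image _ f); [auto |].
  apply countable_subset with L; [exact HL |]. intros y [x [_ <-]]. apply HfL.
Qed.

Lemma luzin_uncountable_bounded L : luzin L ->
  exists N, ~ countable (fun x => L x /\ Rabs x <= INR N).
Proof.
  intros HL. apply NNPP. intros Hno. apply (luzin_uncountable L HL).
  apply countable_subset with (fun x => exists N, L x /\ Rabs x <= INR N).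
  - apply countable_bigunion. intros N. apply NNPP. intros HN. apply Hno. eauto.
  - intros x Lx. destruct (INR_unbounded (Rabs x)) as [N HN]. exists N. split; [exact Lx | lra].
Qed.

Definition shrunk_copy (k m : nat) (x : R) : R := rat_seq k + / INR (S m) * x.

Lemma shrunk_copy_inj k m x y : shrunk_copy k m x = shrunk_copy k m y -> x = y.
Proof.
  unfold shrunk_copy. intros E. apply (Rmult_eq_reg_l (/ INR (S m))); [lra |].
  apply Rinv_neq_0_compat, not_0_INR. lia.
Qed.

Lemma luzin_shrunk_copy_in_interval L a b : luzin L -> a < b ->
  exists k m, ~ countable (fun x => L x /\ a < shrunk_copy k m x < b).
Proof.
  intros HL Hab. destruct (luzin_uncountable_bounded L HL) as [N HN].
  destruct (rat_seq_dense a b Hab) as [k Hk].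
  set (r := Rmin (rat_seq k - a) (b - rat_seq k)).
  assert (Hr : 0 < r) by (apply Rmin_glb_lt; lra).
  assert (Hra : r <= rat_seq k - a) by apply Rmin_l.
  assert (Hrb : r <= b - rat_seq k) by apply Rmin_r.
  destruct (INR_unbounded (INR N / r)) as [m Hm].
  assert (HSm : 0 < INR (S m)) by (apply lt_0_INR; lia).
  assert (HNr : INR N < INR (S m) * r).
  { rewrite S_INR. apply (Rmult_lt_compat_r r) in Hm; [| exact Hr].
    unfold Rdiv in Hm. rewrite Rmult_assoc, Rinv_l, Rmult_1_r in Hm by lra. nra. }
  exists k, m. intros Hcount. apply HN, countable_subset with (1 := Hcount).
  intros x [Lx Hx]. split; [exact Lx |].
  assert (Hsmall : Rabs (/ INR (S m) * x) < r).
  { rewrite Rabs_mult, Rabs_inv, (Rabs_right (INR (S m))) by lra.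
    apply (Rmult_lt_reg_l (INR (S m))); [exact HSm |].
    rewrite <- Rmult_assoc, Rinv_r, Rmult_1_l by lra. lra. }
  apply Rabs_def2 in Hsmall. unfold shrunk_copy. lra.
Qed.

Lemma dense_luzin_of_luzin L : luzin L -> exists S, dense_luzin S.
Proof.
  intros HL. pose proof HL as [[f [Hinj [HfL _]]] HLmeager].
  exists (fun y => exists k m x, L x /\ shrunk_copy k m x = y).
  split; [| split].
  - exists (fun x => shrunk_copy 0 0 (f x)). split.
    + intros x y E. now apply Hinj, (shrunk_copy_inj 0 0).
    + intros x. now exists 0%nat, 0%nat, (f x).
  - intros M HM.
    apply countable_subset with (fun y => exists k m x,
      (L x /\ M (shrunk_copy k m x)) /\ shrunk_copy k m x = y).
    + apply countable_bigunion. intros k. apply countable_bigunion. intros m.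
      apply countable_image, HLmeager, meager_affine; [| exact HM].
      apply Rinv_0_lt_compat, lt_0_INR. lia.
    + intros y [[k [m [x [Lx <-]]]] My]. exists k, m, x. auto.
  - intros a b Hab Hcount.
    destruct (luzin_shrunk_copy_in_interval L a b HL Hab) as [k [m Hkm]].
    apply Hkm, (countable_of_injective_image _ (shrunk_copy k m)).
    + intros x y _ _. apply shrunk_copy_inj.
    + apply countable_subset with (1 := Hcount). intros y [x [[Lx Hx] <-]].
      split; [now exists k, m, x | exact Hx].
Qed.

Definition increasing_on (g : R -> R) (a b : R) : Prop :=
  forall s t, a < s -> s < t -> t < b -> g s < g t.

Definition strict_mono_on (g : R -> R) (a b : R) : Prop :=
  increasing_on g a b \/ increasing_on (fun t => - g t) a b.

Lemma strict_mono_on_sub g a b a' b' :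
  strict_mono_on g a b -> a <= a' -> b' <= b -> strict_mono_on g a' b'.
Proof. intros [H|H] Ha Hb; [left | right]; intros s t Hs Hst Ht; apply H; lra. Qed.

Lemma strict_mono_on_inj g a b s t :
  strict_mono_on g a b -> a < s < b -> a < t < b -> g s = g t -> s = t.
Proof.
  intros Hg Hs Ht E.
  destruct (Rtotal_order s t) as [Hlt|[Heq|Hgt]]; [exfalso | exact Heq | exfalso];
    destruct Hg as [Hg|Hg];
    [ pose proof (Hg s t) | pose proof (Hg s t) | pose proof (Hg t s) | pose proof (Hg t s) ];
    lra.
Qed.

Lemma increasing_on_between g a b c d s : increasing_on g a b ->
  a < c < b -> a < d < b -> a < s < b -> g c < g s < g d -> c < s < d.
Proof.
  intros Hg Hc Hd Hs Hgs.
  split; apply Rnot_le_lt; intros Hle.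
  - destruct (Rle_lt_or_eq_dec s c Hle) as [Hlt|Heq]; [| subst; lra].
    pose proof (Hg s c ltac:(lra) Hlt ltac:(lra)). lra.
  - destruct (Rle_lt_or_eq_dec d s Hle) as [Hlt|Heq]; [| subst; lra].
    pose proof (Hg d s ltac:(lra) Hlt ltac:(lra)). lra.
Qed.

Lemma increasing_image_nowhere_dense g a0 b0 N :
  continuity g -> increasing_on g a0 b0 -> interval_nowhere_dense N ->
  interval_nowhere_dense (fun y => exists t, a0 < t < b0 /\ N t /\ g t = y).
Proof.
  intros Hc Hg HN a b Hab.
  destruct (classic (exists t, a0 < t < b0 /\ a < g t < b)) as [[t [Ht Hgt]]|Hno].
  2:{ exists a, b. repeat split; try lra. intros y Hy [t [Ht [_ <-]]]. apply Hno. eauto. }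
  destruct (continuity_ball g t (Rmin (g t - a) (b - g t)) Hc) as [d [Hd Hball]].
  { apply Rmin_glb_lt; lra. }
  set (c0 := Rmax a0 (t - d)). set (d0 := Rmin b0 (t + d)).
  assert (Hc0 : a0 <= c0 /\ t - d <= c0) by (split; [apply Rmax_l | apply Rmax_r]).
  assert (Hd0 : d0 <= b0 /\ d0 <= t + d) by (split; [apply Rmin_l | apply Rmin_r]).
  assert (Hinside : forall s, c0 < s < d0 -> a < g s < b).
  { intros s Hs. assert (Hgs : Rabs (g s - g t) < Rmin (g t - a) (b - g t)).
    { apply Hball, Rabs_def1; lra. }
    pose proof (Rmin_l (g t - a) (b - g t)). pose proof (Rmin_r (g t - a) (b - g t)).
    apply Rabs_def2 in Hgs. lra. }
  destruct (HN c0 d0) as [c [d' [Hc1 [Hcd [Hd1 Hfree]]]]].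
  { unfold c0, d0. apply Rmax_lub_lt; apply Rmin_glb_lt; lra. }
  set (c' := (2 * c + d') / 3). set (d'' := (c + 2 * d') / 3).
  pose proof (Hinside c' ltac:(unfold c'; lra)). pose proof (Hinside d'' ltac:(unfold d''; lra)).
  exists (g c'), (g d''). split; [lra | split; [apply Hg; unfold c', d''; lra | split; [lra |]]].
  intros y Hy [s [Hs [Ns <-]]].
  pose proof (increasing_on_between g a0 b0 c' d'' s Hg
    ltac:(unfold c'; lra) ltac:(unfold d''; lra) Hs Hy).
  apply (Hfree s); [unfold c', d'' in *; lra | exact Ns].
Qed.

Lemma strict_mono_image_nowhere_dense g a0 b0 N :
  continuity g -> strict_mono_on g a0 b0 -> interval_nowhere_dense N ->
  interval_nowhere_dense (fun y => exists t, a0 < t < b0 /\ N t /\ g t = y).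
Proof.
  intros Hc [Hg|Hg] HN; [now apply increasing_image_nowhere_dense |].
  pose proof (increasing_image_nowhere_dense _ a0 b0 N (continuity_opp g Hc) Hg HN) as Himg.
  apply interval_nowhere_dense_opp in Himg.
  intros a b Hab. destruct (Himg a b Hab) as [c [d [H1 [H2 [H3 Hfree]]]]].
  exists c, d. repeat split; auto. intros x Hx [t [Ht [Nt E]]].
  apply (Hfree x Hx). exists t. split; [exact Ht | split; [exact Nt | unfold opp_fct; lra]].
Qed.

Lemma meager_image_strict_mono g a0 b0 M :
  continuity g -> strict_mono_on g a0 b0 -> meager M ->
  meager (fun y => exists t, a0 < t < b0 /\ M t /\ g t = y).
Proof.
  intros Hc Hg [N [HN Hcov]].
  exists (fun n y => exists t, a0 < t < b0 /\ N n t /\ g t = y). split.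
  - intros n. apply nowhere_denseP, strict_mono_image_nowhere_dense, nowhere_denseP; auto.
  - intros y [t [Ht [Mt <-]]]. destruct (Hcov t Mt) as [n Hn]. exists n, t. auto.
Qed.

Lemma increasing_image_interval g c d :
  continuity g -> c < d -> increasing_on g c d ->
  exists v1 v2, v1 < v2 /\ forall y, v1 < y < v2 -> exists t, c < t < d /\ g t = y.
Proof.
  intros Hc Hcd Hg. set (c' := (2 * c + d) / 3). set (d' := (c + 2 * d) / 3).
  exists (g c'), (g d'). split; [apply Hg; unfold c', d'; lra |].
  intros y Hy.
  destruct (IVT (fun t => g t - y) c' d') as [t [Ht E]];
    [ apply continuity_minus; [exact Hc | apply continuity_const; now intros ? ?]
    | unfold c', d'; lra | lra | lra |].
  exists t. split; [unfold c', d' in *; lra | lra].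
Qed.

Lemma strict_mono_image_interval g c d :
  continuity g -> c < d -> strict_mono_on g c d ->
  exists v1 v2, v1 < v2 /\ forall y, v1 < y < v2 -> exists t, c < t < d /\ g t = y.
Proof.
  intros Hc Hcd [Hg|Hg]; [now apply increasing_image_interval |].
  destruct (increasing_image_interval _ c d (continuity_opp g Hc) Hcd Hg)
    as [v1 [v2 [Hv Hpre]]].
  exists (- v2), (- v1). split; [lra |]. intros y Hy.
  destruct (Hpre (- y)) as [t [Ht E]]; [lra |].
  exists t. split; [exact Ht | unfold opp_fct in E; lra].
Qed.

Section Composition.
Variables (S : R -> Prop) (g : R -> R) (E : R -> Prop).
Hypothesis HS : dense_luzin S.
Hypothesis Hcont : continuity g.
Hypothesis Hsurj : forall y, exists t, g t = y.
Hypothesis HE : countable E.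
Hypothesis Hloc : forall t, ~ E t -> exists a b, a < t < b /\ strict_mono_on g a b.

Lemma comp_card_continuum : card_continuum (fun t => S (g t)).
Proof.
  destruct HS as [[phi [Hinj HSphi]] _].
  set (psi y := epsilon (inhabits 0) (fun t => g t = y)).
  assert (Hpsi : forall y, g (psi y) = y).
  { intros y. exact (epsilon_spec (inhabits 0) (fun t => g t = y) (Hsurj y)). }
  apply (card_continuum_of_injection _ (fun x => psi (phi x))).
  - intros x y Exy. apply Hinj. now rewrite <- (Hpsi (phi x)), <- (Hpsi (phi y)), Exy.
  - intros x. rewrite Hpsi. apply HSphi.
Qed.

(* Off [E], every point lies in a rational interval on which [g] is
   injective, and there [S ∘ g ∩ M] is a copy of [S ∩ g(M)], with [g(M)]
   meager. *)
Lemma comp_meager_countable M : meager M -> countable (fun t => S (g t) /\ M t).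
Proof.
  destruct HS as [_ [HSmeager _]]. intros HM.
  apply countable_subset with (fun t => E t \/ exists i j,
    strict_mono_on g (rat_seq i) (rat_seq j) /\
    rat_seq i < t < rat_seq j /\ S (g t) /\ M t).
  - apply countable_union; [exact HE |].
    apply countable_bigunion. intros i. apply countable_bigunion. intros j.
    destruct (classic (strict_mono_on g (rat_seq i) (rat_seq j))) as [Hg|Hg].
    + apply (countable_of_injective_image _ g).
      { intros x y [_ [Hx _]] [_ [Hy _]].
        now apply (strict_mono_on_inj g (rat_seq i) (rat_seq j)). }
      apply countable_subset with (fun y => S y /\
        exists t, rat_seq i < t < rat_seq j /\ M t /\ g t = y).
      { apply HSmeager, meager_image_strict_mono; assumption. }
      intros y [t [[_ [Ht [St Mt]]] <-]]. split; [exact St |]. now exists t.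
    + apply countable_subset with (1 := countable_empty). now intros t [Hg' _].
  - intros t [St Mt]. destruct (classic (E t)) as [Et|nEt]; [now left | right].
    destruct (Hloc t nEt) as [a [b [Ht Hg]]].
    destruct (rat_seq_dense a t) as [i Hi]; [lra |].
    destruct (rat_seq_dense t b) as [j Hj]; [lra |].
    exists i, j. repeat split; auto; try lra.
    apply (strict_mono_on_sub g a b); [exact Hg | lra | lra].
Qed.

(* [B] is co-meager in an interval [(a, b)]; near a point of [(a, b)] outside
   [E], [g] maps a subinterval onto an interval [(v1, v2)], whose uncountably
   many points of [S] have preimages in [B] except for a countable set. *)
Lemma comp_nonmeager_uncountable B :
  borel B -> ~ meager B -> ~ countable (fun t => S (g t) /\ B t).
Proof.
  destruct HS as [_ [HSmeager HSdense]]. intros HB HnM Hcount.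
  destruct (borel_nonmeager_interval B HB HnM) as [a [b [M [Hab [HM HBM]]]]].
  destruct (exists_outside_countable _ E (interval_uncountable a b Hab) HE)
    as [t [Ht nEt]].
  destruct (Hloc t nEt) as [a' [b' [Ht' Hg]]].
  set (c := Rmax a a'). set (d := Rmin b b').
  assert (Hc : a <= c /\ a' <= c) by (split; [apply Rmax_l | apply Rmax_r]).
  assert (Hd : d <= b /\ d <= b') by (split; [apply Rmin_l | apply Rmin_r]).
  assert (Hcd : c < d) by (unfold c, d; apply Rmax_lub_lt; apply Rmin_glb_lt; lra).
  assert (Hgcd : strict_mono_on g c d) by (apply (strict_mono_on_sub g a' b'); tauto).
  destruct (strict_mono_image_interval g c d Hcont Hcd Hgcd) as [v1 [v2 [Hv Honto]]].
  apply (HSdense v1 v2 Hv).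
  apply countable_subset with (fun y =>
    (exists t, (S (g t) /\ B t) /\ g t = y) \/
    (S y /\ exists t, c < t < d /\ M t /\ g t = y)).
  - apply countable_union; [now apply countable_image |].
    apply HSmeager, meager_image_strict_mono; assumption.
  - intros y [Sy Hy]. destruct (Honto y Hy) as [s [Hs <-]].
    destruct (classic (M s)) as [Ms|nMs].
    + right. split; [exact Sy |]. now exists s.
    + left. exists s. repeat split; auto. apply HBM; [lra | exact nMs].
Qed.

Lemma strong_luzin_comp : strong_luzin (fun t => S (g t)).
Proof.
  split; [split |].
  - exact comp_card_continuum.
  - exact comp_meager_countable.
  - exact comp_nonmeager_uncountable.
Qed.

End Composition.

Lemma dist2_sq p q s t : dist2 p q = Rabs (s - t) ->
  (fst p - fst q) ^ 2 + (snd p - snd q) ^ 2 = (s - t) ^ 2.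
Proof.
  unfold dist2. intros H. rewrite <- (pow2_abs (s - t)), <- H, pow2_sqrt; [reflexivity |].
  apply Rplus_le_le_0_compat; apply pow2_ge_0.
Qed.

(* Equality case of Cauchy-Schwarz: [a u1 + b u2 = t = |(a, b)| |u|]. *)
Lemma plane_trilateration a b u1 u2 t :
  u1 ^ 2 + u2 ^ 2 = 1 -> a ^ 2 + b ^ 2 = t ^ 2 ->
  (a - u1) ^ 2 + (b - u2) ^ 2 = (t - 1) ^ 2 -> a = t * u1 /\ b = t * u2.
Proof.
  intros Hu Hab Hab1.
  assert (Hdot : a * u1 + b * u2 = t) by nra.
  assert (Hsq : Rsqr (a - t * u1) + Rsqr (b - t * u2) = 0).
  { unfold Rsqr.
    replace ((a - t * u1) * (a - t * u1) + (b - t * u2) * (b - t * u2)) with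
      ((a ^ 2 + b ^ 2) - 2 * t * (a * u1 + b * u2) + t ^ 2 * (u1 ^ 2 + u2 ^ 2)) by ring.
    rewrite Hab, Hdot, Hu. ring. }
  apply Rplus_sqr_eq_0 in Hsq. lra.
Qed.

Lemma isometry_R_R2_affine T : isometry_R_R2 T -> exists p1 p2 u1 u2,
  u1 ^ 2 + u2 ^ 2 = 1 /\ forall t, T t = (p1 + u1 * t, p2 + u2 * t).
Proof.
  intros HT.
  exists (fst (T 0)), (snd (T 0)), (fst (T 1) - fst (T 0)), (snd (T 1) - snd (T 0)).
  assert (Hu : (fst (T 1) - fst (T 0)) ^ 2 + (snd (T 1) - snd (T 0)) ^ 2 = 1).
  { rewrite (dist2_sq _ _ _ _ (HT 1 0)). ring. }
  split; [exact Hu |]. intros t.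
  pose proof (dist2_sq _ _ _ _ (HT t 0)) as H0.
  pose proof (dist2_sq _ _ _ _ (HT t 1)) as H1.
  destruct (plane_trilateration (fst (T t) - fst (T 0)) (snd (T t) - snd (T 0))
    (fst (T 1) - fst (T 0)) (snd (T 1) - snd (T 0)) t Hu) as [Hx Hy].
  - rewrite Rminus_0_r in H0. exact H0.
  - rewrite <- H1. ring.
  - destruct (T t) as [x y]. simpl in *. f_equal; lra.
Qed.

Lemma cubic_root_exists be ga : exists s, s ^ 3 + be * s + ga = 0.
Proof.
  set (K := 1 + Rabs be + Rabs ga).
  pose proof (Rle_abs be). pose proof (Rle_abs ga).
  pose proof (Rle_abs (- be)). pose proof (Rle_abs (- ga)). rewrite Rabs_Ropp in *.
  assert (HK : K * K >= K) by (unfold K; nra).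
  assert (HKcube : K ^ 3 >= K * (1 + Rabs be + Rabs ga)) by (unfold K in *; simpl; nra).
  destruct (IVT (fun s => s ^ 3 + be * s + ga) (- K) K) as [s [_ Hs]];
    [ reg | unfold K; lra | simpl; unfold K in *; nra | unfold K in *; nra | now exists s ].
Qed.

Lemma countable_pair x0 x1 : countable (fun x => x = x0 \/ x = x1).
Proof.
  exists (fun n => if Nat.eqb n 0 then x0 else x1).
  intros x [Hx|Hx]; subst x; [now exists 0%nat | now exists 1%nat].
Qed.

Lemma strict_mono_on_of_slope g D D0 a b : D0 <> 0 ->
  (forall s t, g t - g s = (t - s) * D s t) ->
  (forall s t, a < s < b -> a < t < b -> Rabs (D s t - D0) < Rabs D0) ->
  strict_mono_on g a b.
Proof.
  intros HD0 Hslope Hnear.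
  destruct (Rlt_or_le 0 D0) as [Hpos|Hneg]; [left | right]; intros s t Hs Hst Ht;
    pose proof (Hslope s t); pose proof (Hnear s t ltac:(lra) ltac:(lra)) as Hst';
    apply Rabs_def2 in Hst'.
  - rewrite Rabs_right in Hst' by lra.
    assert (0 < (t - s) * D s t) by (apply Rmult_lt_0_compat; lra). lra.
  - rewrite Rabs_left in Hst' by lra.
    assert (0 < (t - s) * - D s t) by (apply Rmult_lt_0_compat; lra). lra.
Qed.

Lemma sq_sum_near s s1 s2 d : 0 < d <= 1 -> Rabs (s1 - s) <= d -> Rabs (s2 - s) <= d ->
  Rabs (s1 ^ 2 + s1 * s2 + s2 ^ 2 - 3 * s ^ 2) <= d * (6 * Rabs s + 3).
Proof.
  intros Hd H1 H2. set (e1 := s1 - s) in *. set (e2 := s2 - s) in *.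
  replace (s1 ^ 2 + s1 * s2 + s2 ^ 2 - 3 * s ^ 2)
    with (3 * s * (e1 + e2) + (e1 ^ 2 + e1 * e2 + e2 ^ 2)) by (unfold e1, e2; ring).
  pose proof (Rle_abs e1). pose proof (Rle_abs (- e1)).
  pose proof (Rle_abs e2). pose proof (Rle_abs (- e2)).
  pose proof (Rle_abs s). pose proof (Rle_abs (- s)). rewrite !Rabs_Ropp in *.
  apply Rabs_le. split; nra.
Qed.

Section CubicAlongLine.
Variables p1 p2 u1 u2 : R.
Hypothesis Hu : u1 ^ 2 + u2 ^ 2 = 1.

Definition line_cubic (t : R) : R := p1 + u1 * t + (p2 + u2 * t) ^ 3.

Definition line_cubic_critical (t : R) : Prop := u1 + 3 * u2 * (p2 + u2 * t) ^ 2 = 0.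

Lemma line_cubic_continuous : continuity line_cubic.
Proof. unfold line_cubic. reg. Qed.

Lemma line_cubic_surjective y : exists t, line_cubic t = y.
Proof.
  unfold line_cubic. destruct (Req_dec u2 0) as [Hu2|Hu2].
  - assert (Hu1 : u1 <> 0) by (intros Hu1; rewrite Hu1, Hu2 in Hu; lra).
    exists ((y - p1 - p2 ^ 3) / u1). rewrite Hu2. field. exact Hu1.
  - destruct (cubic_root_exists (u1 / u2) (p1 - u1 * p2 / u2 - y)) as [s Hs].
    exists ((s - p2) / u2).
    replace (p2 + u2 * ((s - p2) / u2)) with s by (field; exact Hu2).
    replace (p1 + u1 * ((s - p2) / u2) + s ^ 3) with
      (s ^ 3 + u1 / u2 * s + (p1 - u1 * p2 / u2 - y) + y) by (field; exact Hu2).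
    lra.
Qed.

Lemma line_cubic_critical_countable : countable line_cubic_critical.
Proof.
  destruct (Req_dec u2 0) as [Hu2|Hu2].
  - apply countable_subset with (1 := countable_empty). unfold line_cubic_critical.
    intros t Ht. rewrite Hu2 in Ht, Hu. assert (u1 = 0) by lra. subst. lra.
  - set (c := - u1 / (3 * u2)).
    apply countable_subset with (1 := countable_pair ((sqrt c - p2) / u2) ((- sqrt c - p2) / u2)).
    intros t Ht. unfold line_cubic_critical in Ht.
    set (s := p2 + u2 * t) in Ht.
    assert (Hs : Rsqr s = c).
    { unfold c, Rsqr. field_simplify_eq; [lra | exact Hu2]. }
    assert (Hc : 0 <= c) by (rewrite <- Hs; apply Rle_0_sqr).
    rewrite <- (Rsqr_sqrt c Hc) in Hs.
    destruct (Rsqr_eq _ _ Hs) as [E|E]; [left | right];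
      rewrite <- E; unfold s; field; exact Hu2.
Qed.

Lemma line_cubic_slope t1 t2 : line_cubic t2 - line_cubic t1 = (t2 - t1) *
  (u1 + u2 * ((p2 + u2 * t1) ^ 2 + (p2 + u2 * t1) * (p2 + u2 * t2) + (p2 + u2 * t2) ^ 2)).
Proof. unfold line_cubic. ring. Qed.

(* The slope between two nearby points is close to the derivative
   [u1 + 3 u2 s^2] at [s = p2 + u2 t]; [|u2| <= 1] lets us measure nearness
   in [t] instead of [s]. *)
Lemma line_cubic_locally_strict_mono t : ~ line_cubic_critical t ->
  exists a b, a < t < b /\ strict_mono_on line_cubic a b.
Proof.
  unfold line_cubic_critical. intros Ht.
  set (s := p2 + u2 * t) in Ht. set (D0 := u1 + 3 * u2 * s ^ 2) in Ht.
  assert (HD0 : 0 < Rabs D0) by (apply Rabs_pos_lt; exact Ht).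
  pose proof (Rabs_pos s).
  set (d := Rmin 1 (Rabs D0 / (2 * (6 * Rabs s + 3)))).
  assert (Hd : 0 < d <= 1).
  { split; [apply Rmin_glb_lt; [lra | apply Rdiv_lt_0_compat; lra] | apply Rmin_l]. }
  assert (Hdbound : d * (6 * Rabs s + 3) < Rabs D0).
  { assert (Hdr : d <= Rabs D0 / (2 * (6 * Rabs s + 3))) by apply Rmin_r.
    apply (Rmult_le_compat_r (6 * Rabs s + 3)) in Hdr; [| lra].
    replace (Rabs D0 / (2 * (6 * Rabs s + 3)) * (6 * Rabs s + 3)) with (Rabs D0 / 2)
      in Hdr by (field; lra). lra. }
  assert (Hu2 : Rabs u2 <= 1) by (apply Rabs_le; split; nra).
  assert (Hclose : forall t', t - d < t' < t + d -> Rabs ((p2 + u2 * t') - s) <= d).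
  { intros t' Ht'. unfold s. replace (p2 + u2 * t' - (p2 + u2 * t)) with (u2 * (t' - t)) by ring.
    rewrite Rabs_mult. assert (Rabs (t' - t) <= d) by (apply Rabs_le; lra).
    pose proof (Rabs_pos u2). pose proof (Rabs_pos (t' - t)). nra. }
  exists (t - d), (t + d). split; [lra |].
  apply (strict_mono_on_of_slope _ _ D0 _ _ Ht line_cubic_slope).
  intros t1 t2 H1 H2.
  pose proof (sq_sum_near s _ _ d Hd (Hclose t1 H1) (Hclose t2 H2)) as Hq.
  match goal with |- Rabs (?Dq - D0) < _ =>
    replace (Dq - D0) with (u2 * ((p2 + u2 * t1) ^ 2 + (p2 + u2 * t1) * (p2 + u2 * t2)
      + (p2 + u2 * t2) ^ 2 - 3 * s ^ 2)) by (unfold D0; ring) end.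
  rewrite Rabs_mult. pose proof (Rabs_pos u2).
  pose proof (Rabs_pos ((p2 + u2 * t1) ^ 2 + (p2 + u2 * t1) * (p2 + u2 * t2)
    + (p2 + u2 * t2) ^ 2 - 3 * s ^ 2)). nra.
Qed.

End CubicAlongLine.

Theorem mainTheorem6 :
  (exists L : R -> Prop, luzin L) ->
  exists A : R * R -> Prop,
    forall T : R -> R * R, isometry_R_R2 T ->
      strong_luzin (fun t => A (T t)).
Proof.
  intros [L HL]. destruct (dense_luzin_of_luzin L HL) as [S HS].
  exists (fun p => S (fst p + snd p ^ 3)). intros T HT.
  destruct (isometry_R_R2_affine T HT) as [p1 [p2 [u1 [u2 [Hu HTline]]]]].
  replace (fun t => S (fst (T t) + snd (T t) ^ 3))
    with (fun t => S (line_cubic p1 p2 u1 u2 t))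
    by (apply functional_extensionality; intros t; now rewrite HTline).
  apply (strong_luzin_comp _ _ (line_cubic_critical p2 u1 u2) HS).
  - apply line_cubic_continuous.
  - now apply line_cubic_surjective.
  - now apply line_cubic_critical_countable.
  - now apply line_cubic_locally_strict_mono.
Qed.
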